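(* Let $D$ be an integral domain, $T$ an overring of $D$, $\star$ a semistar operation on $D$ and $\star'$ a semistar operation on $T$ with $T^{\star'}=T$. If $T$ is $(\star,\star')$-linked to $D$, then $T^{\ell_{\star,T}}=T$.
   Context: Let $D$ be an integral domain with quotient field $K$. $\overline{\mathbf F}(D)$ denotes the set of all nonzero $D$-submodules of $K$ and $\mathbf f(D)$ the set of nonzero finitely generated $D$-submodules of $K$. A semistar operation on $D$ is a map $\star:\overline{\mathbf F}(D)\to\overline{\mathbf F}(D)$, $E\mapsto E^\star$, such that for all $0\ne x\in K$ and $E,F\in\overline{\mathbf F}(D)$: (1) $(xE)^\star=xE^\star$; (2) $E\subseteq F\Rightarrow E^\star\subseteq F^\star$; (3) $E\subseteq E^\star$ and $(E^\star)^\star=E^\star$. $\star_f$ is defined by $E^{\star_f}=\bigcup\{F^\star:F\in\mathbf f(D),F\subseteq E\}$. A nonzero ideal $I$ of $D$ is a quasi-$\star$-ideal if $I^\star\cap D=I$; a quasi-$\star$-prime is a prime quasi-$\star$-ideal. An overring of $D$ is a ring $T$ with $D\subseteq T\subseteq K$; semistar operations on $T$ are defined likewise. $T$ is $(\star,\star')$-linked to $D$ if for every nonzero finitely generated ideal $F\subseteq D$ with $F^\star=D^\star$ one has $(FT)^{\star'}=T^{\star'}$. The semistar operation $\ell_{\star,T}$ on $T$ is defined by $E^{\ell_{\star,T}}=\bigcap\{ET_{D\setminus P}: P$ a quasi-$\star_f$-prime ideal of $D\}$ for $E\in\overline{\mathbf F}(T)$ (equal to $K$ if there are none). *)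

From HB Require Import structures.
From mathcomp Require Import all_boot all_algebra.
Set Implicit Arguments. Unset Strict Implicit. Unset Printing Implicit Defensive.
Import GRing.Theory.
Local Open Scope ring_scope.

(* D, T, and D-submodules of K are represented as Prop-valued predicates on
   the field K (the quotient field). *)
Section Semistar.
Variable K : fieldType.
Implicit Types (R D T E F A B I P : K -> Prop).

Definition ssub A B := forall z, A z -> B z.
Definition seteq A B := forall z, A z <-> B z.

Definition subring R :=
  [/\ R 0, R 1, (forall x y, R x -> R y -> R (x - y))
    & (forall x y, R x -> R y -> R (x * y))].

Definition is_quotient_field R :=
  forall x, exists a b, [/\ R a, R b, b != 0 & x = a / b].

Definition submod R E :=
  [/\ E 0, (forall x y, E x -> E y -> E (x + y))
    & (forall r x, R r -> E x -> E (r * x))].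

Definition Fbar R E := submod R E /\ exists x, E x /\ x != 0.

Definition fin_gen R E :=
  exists s : seq K, forall z, E z <->
    exists c : seq K, [/\ size c = size s, (forall i, (i < size c)%N -> R c`_i)
      & z = \sum_(i < size s) c`_i * s`_i].

Definition ffg R E := Fbar R E /\ fin_gen R E.

Definition scale (x : K) E := fun z => exists e, E e /\ z = x * e.

Definition semistar R (st : (K -> Prop) -> (K -> Prop)) :=
  [/\ (forall E, Fbar R E -> Fbar R (st E)),
      (forall x E, x != 0 -> Fbar R E -> seteq (st (scale x E)) (scale x (st E))),
      (forall E F, Fbar R E -> Fbar R F -> ssub E F -> ssub (st E) (st F))
    & (forall E, Fbar R E -> ssub E (st E) /\ seteq (st (st E)) (st E))].

Definition star_f R (st : (K -> Prop) -> (K -> Prop)) E :=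
  fun z => exists F, [/\ ffg R F, ssub F E & st F z].

Definition ideal R I := ssub I R /\ submod R I.

Definition quasi_ideal R (st : (K -> Prop) -> (K -> Prop)) I :=
  [/\ ideal R I, (exists x, I x /\ x != 0) & seteq (fun z => st I z /\ R z) I].

Definition quasi_prime R (st : (K -> Prop) -> (K -> Prop)) P :=
  [/\ quasi_ideal R st P, ~ P 1
    & (forall a b, R a -> R b -> P (a * b) -> P a \/ P b)].

Definition prodmod A B := fun z =>
  exists n (a b : 'I_n -> K), [/\ (forall i, A (a i)), (forall i, B (b i))
    & z = \sum_i a i * b i].

Definition linked D T (st st' : (K -> Prop) -> (K -> Prop)) :=
  forall F, ffg D F -> ssub F D -> seteq (st F) (st D) ->
    seteq (st' (prodmod T F)) (st' T).

Definition locT D T P := fun z => exists t s, [/\ T t, D s, ~ P s & z = t / s].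

Definition ell D T (st : (K -> Prop) -> (K -> Prop)) E := fun z =>
  forall P, quasi_prime D (star_f D st) P -> prodmod (locT D T P) E z.

End Semistar.

(* Only T^ell <= T needs proof.  For z in T^ell let J = (T :_D z), a nonzero
   ideal of D since z is a fraction.  If 1 is in J^{st_f}, then some finitely
   generated F <= J has F^st = D^st, so linkedness gives (FT)^st' = T^st' = T and
   z is in z (FT)^st' = (z FT)^st' <= T^st' = T.  Otherwise Zorn's lemma yields an
   ideal P containing J, maximal with 1 not in P^{st_f}; such a P is a
   quasi-st_f-prime, so z lies in T_{D \ P}: s z is in T for some s not in P,
   contradicting s in J <= P. *)

From HB Require Import structures.
From mathcomp Require Import all_boot all_algebra.
From mathcomp Require Import boolp classical_sets ring.
Set Implicit Arguments. Unset Strict Implicit. Unset Printing Implicit Defensive.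
Import GRing.Theory.
Local Open Scope ring_scope.

Section Basics.
Variable K : fieldType.
Implicit Types (R D T E F : K -> Prop) (l s : seq K).

Lemma seteq_eq E F : seteq E F -> E = F.
Proof. by move=> EF; apply: funext => z; apply: propext. Qed.

Lemma subring0 R : subring R -> R 0. Proof. by case. Qed.
Lemma subring1 R : subring R -> R 1. Proof. by case. Qed.
Lemma subringB R x y : subring R -> R x -> R y -> R (x - y).
Proof. by case=> _ _ hB _; apply: hB. Qed.
Lemma subringM R x y : subring R -> R x -> R y -> R (x * y).
Proof. by case=> _ _ _ hM; apply: hM. Qed.
Lemma subringN R x : subring R -> R x -> R (- x).
Proof. by move=> hR Rx; rewrite -sub0r; apply: subringB hR (subring0 hR) Rx. Qed.
Lemma subringD R x y : subring R -> R x -> R y -> R (x + y).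
Proof. by move=> hR Rx Ry; rewrite -[y]opprK; apply: subringB => //; apply: subringN. Qed.

Lemma subring_submod R : subring R -> submod R R.
Proof. by move=> hR; split=> [|x y|r x]; [exact: subring0|exact: subringD|exact: subringM]. Qed.

Lemma subring_Fbar R : subring R -> Fbar R R.
Proof.
by move=> hR; split; [exact: subring_submod|exists 1; split; [exact: subring1|exact: oner_neq0]].
Qed.

Lemma overring_submod D T : subring T -> ssub D T -> submod D T.
Proof. by move=> hT DT; split=> [|x y|r x /DT]; [exact: subring0|exact: subringD|exact: subringM]. Qed.

Lemma scale_submod R E x : submod R E -> submod R (scale x E).
Proof.
case=> E0 ED EM; split.
- by exists 0; rewrite mulr0.
- by move=> _ _ [u [Eu ->]] [v [Ev ->]]; exists (u + v); rewrite mulrDr; split => //; apply: ED.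
- by move=> r _ Rr [u [Eu ->]]; exists (r * u); rewrite mulrCA; split => //; apply: EM.
Qed.

Lemma scale_Fbar R E x : x != 0 -> Fbar R E -> Fbar R (scale x E).
Proof.
move=> x0 [hE [e [Ee e0]]]; split; first exact: scale_submod.
by exists (x * e); split; [exists e|rewrite mulf_neq0].
Qed.

Fixpoint rspan R l : K -> Prop :=
  if l is x :: l' then fun z => exists d w, [/\ R d, rspan R l' w & z = d * x + w]
  else fun z => z = 0.

Lemma rspan_sumP R l z :
  (exists c : seq K, [/\ size c = size l, (forall i, (i < size c)%N -> R c`_i)
      & z = \sum_(i < size l) c`_i * l`_i]) <-> rspan R l z.
Proof.
elim: l z => [|x l IH] z /=.
  split; first by case=> c [_ _ ->]; rewrite big_ord0.
  by move->; exists [::]; split => //; rewrite big_ord0.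
split.
  case=> [[|c0 c]] [//= [Hs] Rc ->]; rewrite big_ord_recl /=.
  exists c0, (\sum_(i < size l) c`_i * l`_i); split => //; first exact: (Rc 0%N).
  by apply/IH; exists c; split => // i; apply: (Rc i.+1).
case=> d [w [Rd /IH [c [Hs Rc ->]] ->]].
exists (d :: c); split; first by rewrite /= Hs.
  by case=> [|i] //= Hi; apply: Rc.
by rewrite big_ord_recl.
Qed.

Lemma rspan_fin_gen R l : fin_gen R (rspan R l).
Proof. by exists l => z; rewrite rspan_sumP. Qed.

Lemma fin_genE R F : fin_gen R F -> exists s, F = rspan R s.
Proof. by case=> s Fs; exists s; apply: seteq_eq => z; rewrite Fs rspan_sumP. Qed.

Lemma ffgE R F : ffg R F -> exists s, F = rspan R s.
Proof. by case=> _ /fin_genE. Qed.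

Lemma scale_rspan R l x : scale x (rspan R l) = rspan R (map ( *%R x) l).
Proof.
apply: seteq_eq; elim: l => [|y l IH] z /=.
  by split=> [[e [-> ->]]|->]; [rewrite mulr0|exists 0; rewrite mulr0].
split=> [[_ [[d [w [Rd Sw ->]]] ->]]|[d [_ [Rd /IH [w [Sw ->]] ->]]]].
  by exists d, (x * w); split => //; [apply/IH; exists w|ring].
by exists (d * y + w); split; [exists d, w|ring].
Qed.

Section Span.
Variables (R : K -> Prop) (hR : subring R).

Lemma rspan_submod l : submod R (rspan R l).
Proof.
elim: l => [|x l [IH0 IHD IHM]] /=.
  by split=> [|_ _ -> ->|r _ _ ->]; rewrite ?addr0 ?mulr0.
split.
- by exists 0, 0; split; [exact: subring0|done|rewrite mul0r addr0].
- move=> _ _ [d1 [w1 [R1 S1 ->]]] [d2 [w2 [R2 S2 ->]]].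
  by exists (d1 + d2), (w1 + w2); split; [exact: subringD|exact: IHD|ring].
- move=> r _ Rr [d [w [Rd Sw ->]]].
  by exists (r * d), (r * w); split; [exact: subringM|exact: IHM|ring].
Qed.

Lemma rspan_mem l x : x \in l -> rspan R l x.
Proof.
elim: l => [|y l IH] //=; rewrite inE => /orP [/eqP ->|xl].
  by exists 1, 0; split; [exact: subring1|case: (rspan_submod l)|rewrite mul1r addr0].
by exists 0, x; split; [exact: subring0|exact: IH|rewrite mul0r add0r].
Qed.

Lemma rspan_Fbar l b : b \in l -> b != 0 -> Fbar R (rspan R l).
Proof. by move=> bl b0; split; [exact: rspan_submod|exists b; split => //; exact: rspan_mem]. Qed.

Lemma rspan_ffg l b : b \in l -> b != 0 -> ffg R (rspan R l).
Proof. by move=> bl b0; split; [exact: rspan_Fbar bl b0|exact: rspan_fin_gen]. Qed.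

End Span.

Lemma rspan_min R E l : submod R E -> (forall x, x \in l -> E x) -> ssub (rspan R l) E.
Proof.
case=> E0 ED EM; elim: l => [|y l IH] El z /=; first by move->.
case=> d [w [Rd Sw ->]]; apply: ED; first by apply: EM => //; apply: El; exact: mem_head.
by apply: IH => // x xl; apply: El; rewrite inE xl orbT.
Qed.

Lemma scale_ffg R F x : x != 0 -> ffg R F -> ffg R (scale x F).
Proof.
move=> x0 [hF /fin_genE [s Fs]]; split; first exact: scale_Fbar.
by rewrite Fs scale_rspan; exact: rspan_fin_gen.
Qed.

Lemma rspan_subset D T l : subring T -> ssub D T -> ssub (rspan D l) (rspan T l).
Proof.
move=> hT DT; apply: rspan_min; last by move=> x; apply: rspan_mem.
have [S0 SD SM] := rspan_submod hT l.
by split=> // r x /DT; exact: SM.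
Qed.

Lemma prodmod_rspan D T l :
  subring D -> subring T -> ssub D T -> prodmod T (rspan D l) = rspan T l.
Proof.
move=> hD hT DT; apply: seteq_eq => z; split.
  case=> n [a [b [Ta Sb ->]]]; have [S0 SD SM] := rspan_submod hT l.
  by apply: (big_ind (rspan T l)) => // i _; apply: SM => //; exact: rspan_subset DT _ (Sb i).
move/rspan_sumP=> [c [Hs Tc ->]].
exists (size l), (fun i : 'I_(size l) => c`_i), (fun i : 'I_(size l) => l`_i); split => //.
  by move=> i; apply: Tc; rewrite Hs.
by move=> i; apply: rspan_mem => //; exact: mem_nth.
Qed.

End Basics.

Definition conductor (K : fieldType) (D T : K -> Prop) (z : K) := fun d => D d /\ T (d * z).

Lemma conductor_ideal (K : fieldType) (D T : K -> Prop) z :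
  subring D -> submod D T -> ideal D (conductor D T z).
Proof.
move=> hD [T0 TD TM]; split; first by move=> d [].
split.
- by split; [exact: subring0|rewrite mul0r].
- by move=> x y [Dx Tx] [Dy Ty]; split; [exact: subringD|rewrite mulrDl; exact: TD].
- by move=> r x Dr [Dx Tx]; split; [exact: subringM|rewrite -mulrA; exact: TM].
Qed.

Section StarClosure.
Variables (K : fieldType) (D : K -> Prop) (st : (K -> Prop) -> (K -> Prop)).
Hypotheses (hD : subring D) (hst : semistar D st).
Implicit Types (E F G I : K -> Prop).

Lemma semistar_Fbar E : Fbar D E -> Fbar D (st E).
Proof. by case: hst => + _ _ _; apply. Qed.

Lemma semistar_submod E : Fbar D E -> submod D (st E).
Proof. by case/semistar_Fbar. Qed.

Lemma semistar_scale x E : x != 0 -> Fbar D E -> seteq (st (scale x E)) (scale x (st E)).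
Proof. by case: hst => _ + _ _; apply. Qed.

Lemma semistar_mono E F : Fbar D E -> Fbar D F -> ssub E F -> ssub (st E) (st F).
Proof. by case: hst => _ _ + _; apply. Qed.

Lemma semistar_ext E : Fbar D E -> ssub E (st E).
Proof. by case: hst => _ _ _ ext /ext []. Qed.

Lemma semistar_idem E : Fbar D E -> ssub (st (st E)) (st E).
Proof. by case: hst => _ _ _ ext /ext [_ idE] z /idE. Qed.

Lemma semistar_scale_mem x E e : x != 0 -> Fbar D E -> st E e -> st (scale x E) (x * e).
Proof. by move=> x0 hE Ee; apply/(semistar_scale x0 hE); exists e. Qed.

Lemma semistar_unit_eq F : Fbar D F -> ssub F D -> st F 1 -> seteq (st F) (st D).
Proof.
move=> hF FD F1 z; split; first exact: (semistar_mono hF (subring_Fbar hD) FD).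
have DF : ssub D (st F) by move=> d Dd; rewrite -[d]mulr1; case: (semistar_submod hF) => _ _; apply.
by move/(semistar_mono (subring_Fbar hD) (semistar_Fbar hF) DF); exact: semistar_idem.
Qed.

Section NonzeroIdeal.
Variables (I : K -> Prop) (b : K).
Hypotheses (hI : ideal D I) (Ib : I b) (b0 : b != 0).

Lemma starf_seq_witness (l : seq K) : (forall x, x \in l -> star_f D st I x) ->
  exists m, [/\ forall y, y \in m -> I y, b \in m & forall x, x \in l -> st (rspan D m) x].
Proof.
elim: l => [|x l IH] lI.
  by exists [:: b]; split; rewrite ?mem_head // => y; rewrite inE => /eqP ->.
have [m [mI bm lm]] : exists m, [/\ forall y, y \in m -> I y, b \in m
    & forall x, x \in l -> st (rspan D m) x].
  by apply: IH => y yl; apply: lI; rewrite inE yl orbT.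
have [F [hF FI Fx]] := lI x (mem_head _ _).
have [s Fs] := ffgE hF.
have sI : forall y, y \in s -> I y by move=> y ys; apply: FI; rewrite Fs; exact: rspan_mem.
have hsm : Fbar D (rspan D (s ++ m)) by apply: (rspan_Fbar hD _ b0); rewrite mem_cat bm orbT.
have rspan_cat r : (forall u, u \in r -> u \in s ++ m) -> ssub (rspan D r) (rspan D (s ++ m)).
  by move=> rsm; apply: rspan_min; [exact: rspan_submod|move=> u /rsm; exact: rspan_mem].
exists (s ++ m); split; first by move=> y; rewrite mem_cat => /orP [/sI|/mI].
  by rewrite mem_cat bm orbT.
move=> y; rewrite inE => /orP [/eqP ->|yl].
  apply: (semistar_mono (proj1 hF) hsm) Fx; rewrite Fs.
  by apply: rspan_cat => u us; rewrite mem_cat us.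
apply: (semistar_mono (rspan_Fbar hD bm b0) hsm) (lm y yl).
by apply: rspan_cat => u um; rewrite mem_cat um orbT.
Qed.

Lemma starf_seq (l : seq K) : (forall x, x \in l -> star_f D st I x) ->
  exists F, [/\ ffg D F, ssub F I & forall x, x \in l -> st F x].
Proof.
move=> /starf_seq_witness [m [mI bm lm]]; exists (rspan D m); split=> //.
  exact: rspan_ffg bm b0.
by apply: rspan_min => //; case: hI.
Qed.

Lemma starf_ext : ssub I (star_f D st I).
Proof.
move=> w Iw; have bwb : b \in [:: w; b] by rewrite !inE eqxx orbT.
exists (rspan D [:: w; b]); split; first exact: rspan_ffg bwb b0.
  by apply: rspan_min; [case: hI|move=> y; rewrite !inE => /orP [/eqP ->|/eqP ->]].
by apply: (semistar_ext (rspan_Fbar hD bwb b0)); exact/rspan_mem/mem_head.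
Qed.

Lemma starf_submod : submod D (star_f D st I).
Proof.
have starf_pair x y : star_f D st I x -> star_f D st I y ->
    exists F, [/\ ffg D F, ssub F I, st F x & st F y].
  move=> Ix Iy; have [F [hF FI Fxy]] : exists F, [/\ ffg D F, ssub F I
      & forall u, u \in [:: x; y] -> st F u].
    by apply: starf_seq => u; rewrite !inE => /orP [/eqP ->|/eqP ->].
  by exists F; split=> //; apply: Fxy; rewrite !inE eqxx ?orbT.
split.
- by apply: starf_ext; case: hI => _ [].
- move=> x y Ix Iy; have [G [hG GI Gx Gy]] := starf_pair x y Ix Iy.
  by exists G; split=> //; case: (semistar_submod (proj1 hG)) => _ + _; apply.
- move=> r x Dr [G [hG GI Gx]]; exists G; split=> //.
  by case: (semistar_submod (proj1 hG)) => _ _; apply.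
Qed.

Lemma starf_idem : ssub (star_f D st (star_f D st I)) (star_f D st I).
Proof.
move=> z [F [hF FI Fz]]; have [s Fs] := ffgE hF.
have [G [hG GI sG]] := starf_seq (l := s) (fun x xs => FI x ltac:(by rewrite Fs; exact: rspan_mem)).
have hstG := semistar_Fbar (proj1 hG).
exists G; split=> //; apply: (semistar_idem (proj1 hG)).
apply: (semistar_mono (proj1 hF) hstG) Fz; rewrite Fs.
exact: rspan_min (semistar_submod (proj1 hG)) sG.
Qed.

End NonzeroIdeal.
End StarClosure.

Lemma total_bigcup_seq (T : eqType) (C : set (set T)) (l : seq T) :
  (exists X, C X) -> total_on C subset ->
  (forall x, x \in l -> (\bigcup_(X in C) X)%classic x) ->
  exists2 X, C X & forall x, x \in l -> X x.
Proof.
move=> [X0 CX0] Ctot; elim: l => [|x l IH] lC; first by exists X0.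
have [X CX lX] : exists2 X, C X & forall y, y \in l -> X y.
  by apply: IH => y yl; apply: lC; rewrite inE yl orbT.
have [Y CY Yx] := lC x (mem_head _ _).
have [XY|YX] := Ctot X Y CX CY.
- by exists Y => // y; rewrite inE => /orP [/eqP ->|/lX/XY].
- by exists X => // y; rewrite inE => /orP [/eqP ->|/lX]; [exact: YX|].
Qed.

Section MaximalIdeal.
Local Open Scope classical_set_scope.
Variables (K : fieldType) (D : K -> Prop) (st : (K -> Prop) -> (K -> Prop)).

Definition star_proper_over (J I : K -> Prop) :=
  [/\ ideal D I, ssub J I & ~ star_f D st I 1].

Variables (J : K -> Prop).
Hypotheses (hD : subring D) (hJ : star_proper_over J J).

Lemma star_proper_over_of_cover U : ssub J U ->
  (forall l : seq K, (forall x, x \in l -> U x) ->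
     exists W, [/\ star_proper_over J W, ssub W U & forall x, x \in l -> W x]) ->
  star_proper_over J U.
Proof.
move=> JU cover.
have cover1 x : U x -> exists W, [/\ star_proper_over J W, ssub W U & W x].
  move=> Ux; have [|W [hW WU lW]] := cover [:: x]; first by move=> y; rewrite inE => /eqP ->.
  by exists W; split=> //; apply: lW; rewrite mem_head.
split=> //; first split; first by move=> x /cover1 [W [[[WD _] _ _] _ Wx]]; exact: WD.
- split; first by apply: JU; case: hJ => [[_ []]].
  + move=> x y Ux Uy; have [|W [[[_ [_ WD _]] _ _] WU lW]] := cover [:: x; y].
      by move=> u; rewrite !inE => /orP [/eqP ->|/eqP ->].
    by apply/WU/WD; apply: lW; rewrite !inE eqxx ?orbT.
  + move=> r x Dr /cover1 [W [[[_ [_ _ WM]] _ _] WU Wx]]; exact/WU/WM.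
- move=> [F [hF FU F1]]; have [s Fs] := ffgE hF.
  have [|W [[[_ hW] _ W1] WU sW]] := cover s.
    by move=> x xs; apply: FU; rewrite Fs; exact: rspan_mem.
  by apply: W1; exists F; split=> //; rewrite Fs; exact: rspan_min.
Qed.

(* Zorn_bigcup must also handle the empty chain, hence the union with J. *)
Lemma maximal_star_proper_over :
  exists M, star_proper_over J M /\
    forall I, star_proper_over J I -> ssub M I -> ssub I M.
Proof.
pose P X := star_proper_over J (J `|` X).
have chain Fm : Fm `<=` P -> total_on Fm subset -> P (\bigcup_(X in Fm) X).
  move=> FmP Fmtot; apply: star_proper_over_of_cover; first exact: subsetUl.
  move=> l lU; pose C := [set J `|` X | X in [set set0] `|` Fm].
  have C0 : exists W, C W by exists (J `|` set0), set0; [left|].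
  have Ctot : total_on C subset.
    move=> _ _ [X FmX <-] [Y FmY <-].
    have [XY|YX] : X `<=` Y \/ Y `<=` X.
      case: FmX FmY => [-> _|FmX [-> |]]; [by left|by right|exact: Fmtot].
    + by left; apply: setUS.
    + by right; apply: setUS.
  have lC : forall x, x \in l -> (\bigcup_(W in C) W) x.
    move=> x /lU [Jx|[X FmX Xx]]; first by exists (J `|` set0); [exists set0; [left|]|left].
    by exists (J `|` X); [exists X; [right|]|right].
  have [W [X FmX <-] lW] := total_bigcup_seq C0 Ctot lC.
  exists (J `|` X); split=> //; last by apply: setUS; case: FmX => [->|FmX] //; exact: bigcup_sup.
  by case: FmX => [->|/FmP]; rewrite ?setU0.
have [A [PA Amax]] := Zorn_bigcup chain.
exists (J `|` A); split=> // I PI MI; apply: contrapT => IM.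
apply: (Amax I); last by rewrite /P setUidr //; case: PI.
split; first by move=> x Ax; apply/MI; right.
by move=> IA; apply: IM => x /IA; right.
Qed.

End MaximalIdeal.

Section MaximalQuasiPrime.
Variables (K : fieldType) (D : K -> Prop) (st : (K -> Prop) -> (K -> Prop)).
Hypotheses (hD : subring D) (hst : semistar D st).
Variables (M : K -> Prop) (b : K).
Hypotheses (hM : ideal D M) (Mb : M b) (b0 : b != 0) (M1 : ~ star_f D st M 1)
  (Mmax : forall I, ideal D I -> ssub M I -> ~ star_f D st I 1 -> ssub I M).

Lemma maximal_starf_closed : ssub (fun w => star_f D st M w /\ D w) M.
Proof.
have [MD _] := hM.
apply: Mmax => [||[F [hF FM F1]]].
- have [S0 SD SM] := starf_submod hD hst hM Mb b0.
  split; first by move=> w [].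
  split; first by split; [exact: S0|exact: subring0].
  + by move=> x y [Sx Dx] [Sy Dy]; split; [exact: SD|exact: subringD].
  + by move=> r x Dr [Sx Dx]; split; [exact: SM|exact: subringM].
- by move=> w Mw; split; [apply: (starf_ext hD hst hM Mb b0)|exact: MD].
- by apply: M1; apply: (starf_idem hD hst hM Mb b0); exists F; split=> // w /FM [].
Qed.

Lemma maximal_starf_prime a c : D a -> D c -> M (a * c) -> M a \/ M c.
Proof.
move=> Da Dc Mac; apply: contrapT => /not_orP [Ma Mc].
have [MD [M0 _ MM]] := hM.
have a0 : a != 0 by apply/eqP => a0; apply: Ma; rewrite a0.
have hC := conductor_ideal a hD (proj2 hM).
have MC : ssub M (conductor D M a) by move=> w Mw; split; [exact: MD|rewrite mulrC; exact: MM].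
have [F [hF FC F1]] : star_f D st (conductor D M a) 1.
  by apply: contrapT => C1; apply: Mc; apply: (Mmax hC MC C1); split; rewrite 1?mulrC.
apply: Ma; apply: maximal_starf_closed; split=> //.
exists (scale a F); split; first exact: scale_ffg.
  by move=> _ [e [Fe ->]]; rewrite mulrC; case: (FC e Fe).
by have := semistar_scale_mem hst a0 (proj1 hF) F1; rewrite mulr1.
Qed.

Lemma quasi_prime_of_maximal : quasi_prime D (star_f D st) M.
Proof.
have [MD _] := hM; have Mst := starf_ext hD hst hM Mb b0.
split; [split=> //; first by exists b|by move/Mst|exact: maximal_starf_prime].
by move=> w; split=> [|Mw]; [exact: maximal_starf_closed|split; [exact: Mst|exact: MD]].
Qed.

End MaximalQuasiPrime.

Lemma quasi_prime_over (K : fieldType) (D J : K -> Prop) st b :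
  subring D -> semistar D st -> ideal D J -> J b -> b != 0 -> ~ star_f D st J 1 ->
  exists2 P, quasi_prime D (star_f D st) P & ssub J P.
Proof.
move=> hD hst hJ Jb b0 J1.
have [M [[hM JM M1] Mmax]] := maximal_star_proper_over hD (And3 hJ (fun _ Jx => Jx) J1).
exists M => //; apply: (quasi_prime_of_maximal hD hst hM (JM b Jb) b0 M1) => I hI MI I1.
by apply: Mmax => //; split=> // x /JM /MI.
Qed.

Lemma prodmod_locT_denom (K : fieldType) (D T P : K -> Prop) z :
  subring D -> subring T -> ssub D T -> P 0 -> ~ P 1 ->
  (forall a c, D a -> D c -> P (a * c) -> P a \/ P c) ->
  prodmod (locT D T P) T z -> exists s, [/\ D s, ~ P s & T (s * z)].
Proof.
move=> hD hT DT P0 P1 Pprime [n [a [c [La Tc ->]]]].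
apply: (big_ind (fun w => exists s, [/\ D s, ~ P s & T (s * w)])).
- by exists 1; split; [exact: subring1|done|rewrite mulr0; exact: subring0].
- move=> w1 w2 [s1 [D1 P1' T1]] [s2 [D2 P2 T2]].
  exists (s1 * s2); split; [exact: subringM|by case/Pprime|].
  rewrite (_ : _ * _ = s2 * (s1 * w1) + s1 * (s2 * w2)); last by ring.
  by apply: (subringD hT); apply: (subringM hT) => //; exact: DT.
- move=> i _; have [t [s [Tt Ds Ps ->]]] := La i.
  have s0 : s != 0 by apply/eqP => s0; apply: Ps; rewrite s0.
  exists s; split=> //; rewrite (_ : _ * _ = t * c i); last by field.
  exact: subringM hT _ _.
Qed.

Lemma subset_ell (K : fieldType) (D T : K -> Prop) st :
  subring D -> subring T -> ssub T (ell D T st T).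
Proof.
move=> hD hT z Tz P [_ P1 _]; exists 1%N, (fun _ => 1), (fun _ => z); split=> //.
  by move=> _; exists 1, 1; split; [exact: subring1|exact: subring1|done|rewrite divr1].
by rewrite big_ord1 mul1r.
Qed.

Section Linked.
Variables (K : fieldType) (D T : K -> Prop) (st st' : (K -> Prop) -> (K -> Prop)).
Hypotheses (hD : subring D) (hT : subring T) (DT : ssub D T)
  (hst : semistar D st) (hst' : semistar T st') (stT : seteq (st' T) T)
  (link : linked D T st st').

Lemma linked_conductor_mem z F :
  ffg D F -> ssub F (conductor D T z) -> st F 1 -> T z.
Proof.
move=> hF FzT F1; have FD : ssub F D by move=> x /FzT [].
have [s Fs] := ffgE hF.
have G1 : st' (rspan T s) 1.
  have := link hF FD (semistar_unit_eq hD hst (proj1 hF) FD F1).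
  by rewrite Fs prodmod_rspan // => /(_ 1) [_]; apply; apply/stT; exact: subring1.
have [->|z0] := eqVneq z 0; first exact: subring0.
have hG : Fbar T (rspan T s).
  have [x [Fx x0]] := proj2 (proj1 hF).
  by split; [exact: rspan_submod|exists x; split=> //; apply: (rspan_subset hT DT); rewrite -Fs].
have zGT : ssub (scale z (rspan T s)) T.
  have GzT : ssub (rspan T s) (conductor T T z).
    apply: rspan_min; first exact: (proj2 (conductor_ideal z hT (subring_submod hT))).
    move=> y ys; have [Dy Tyz] : conductor D T z y by apply: FzT; rewrite Fs; exact: rspan_mem.
    by split=> //; exact: DT.
  by move=> _ [g [/GzT [_ Tgz] ->]]; rewrite mulrC.
apply/stT; apply: (semistar_mono hst' (scale_Fbar z0 hG) (subring_Fbar hT) zGT).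
by have := semistar_scale_mem hst' z0 hG G1; rewrite mulr1.
Qed.

End Linked.

Theorem lemma3p14 (K : fieldType) (D T : K -> Prop)
  (st st' : (K -> Prop) -> (K -> Prop)) :
  subring D -> is_quotient_field D ->
  subring T -> ssub D T ->
  semistar D st -> semistar T st' ->
  seteq (st' T) T ->
  linked D T st st' ->
  seteq (ell D T st T) T.
Proof.
move=> hD hQ hT DT hst hst' stT link z; split; last exact: subset_ell.
move=> ellz; have [a [c [Da Dc c0 za]]] := hQ z.
have Jc : conductor D T z c by split=> //; rewrite za mulrC divfK //; exact: DT.
have hJ := conductor_ideal z hD (overring_submod hT DT).
have [[F [hF FJ F1]]|J1] := EM (star_f D st (conductor D T z) 1).
  exact: (linked_conductor_mem hD hT DT hst hst' stT link hF FJ F1).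
have [P qP JP] := quasi_prime_over hD hst hJ Jc c0 J1.
have [[[_ [P0 _ _]] _ _] P1 Pprime] := qP.
have [s [Ds Ps Tsz]] := prodmod_locT_denom hD hT DT P0 P1 Pprime (ellz P qP).
by case: Ps; apply: JP; split.
Qed.
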